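(* Let $f:\mathbb{R}^d\to\mathbb{R}$ be differentiable and assume: (a) there is $f^{\inf}\in\mathbb{R}$ with $f(x)\ge f^{\inf}$ for all $x\in\mathbb{R}^d$; (b) there is ${\bf L}\in\mathbb{S}^d_{+}$ such that $f(x)\le f(y)+\langle\nabla f(y),x-y\rangle+\tfrac12\langle {\bf L}(x-y),x-y\rangle$ for all $x,y\in\mathbb{R}^d$. Let ${\bf D}\in\mathbb{S}^d_{++}$ and let $({\bf S}^k)_{k\ge0}$, $({\bf T}^k)_{k\ge0}$ be sequences of random matrices such that ${\bf S}^k,{\bf T}^k\in\mathbb{S}^d_+$, the ${\bf S}^k$ are i.i.d. with some distribution $\mathcal S$, the ${\bf T}^k$ are i.i.d. with some distribution $\mathcal T$, and $\mathbb{E}[{\bf S}^k]=\mathbb{E}[{\bf T}^k]={\bf I}_d$ for all $k$. Fix $x^0\in\mathbb{R}^d$. Then for every $K\ge1$, $$\frac1K\sum_{k=0}^{K-1}\mathbb{E}\big[\|\nabla f(x^k)\|_{{\bf D}}^2\big]\le\frac{2(f(x^0)-f^{\inf})}{K},$$ provided one of the following holds: (i) $x^{k+1}=x^k-{\bf D}{\bf S}^k\nabla f(x^k)$ for all $k\ge0$ (det-CGD1) and $\mathbb{E}[{\bf S}^k{\bf D}{\bf L}{\bf D}{\bf S}^k]\preceq{\bf D}$; (ii) $x^{k+1}=x^k-{\bf T}^k{\bf D}\nabla f(x^k)$ for all $k\ge0$ (det-CGD2) and $\mathbb{E}[{\bf D}{\bf T}^k{\bf L}{\bf T}^k{\bf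 D}]\preceq{\bf D}$.
   Context: $\mathbb{S}^d_{+}$ (resp. $\mathbb{S}^d_{++}$) denotes the set of $d\times d$ symmetric positive semidefinite (resp. positive definite) matrices; $\preceq$ is the Loewner order. For ${\bf Q}\in\mathbb{S}^d_{+}$, $\|x\|_{{\bf Q}}^2:=\langle {\bf Q}x,x\rangle$. All expectations appearing are assumed finite. *)

From HB Require Import structures.
From mathcomp Require Import all_boot all_order all_algebra.
From mathcomp Require Import all_classical all_reals all_analysis.
Set Implicit Arguments. Unset Strict Implicit. Unset Printing Implicit Defensive.
Import Order.TTheory GRing.Theory Num.Theory.
Import numFieldNormedType.Exports.
Local Open Scope classical_set_scope.
Local Open Scope ring_scope.

Section Defs.
Variables (R : realType) (n : nat).

Definition inner (x y : 'cV[R]_n) : R := (x^T *m y) 0 0.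

Definition qnorm (Q : 'M[R]_n) (x : 'cV[R]_n) : R := inner (Q *m x) x.

Definition psd (M : 'M[R]_n) : Prop :=
  M^T = M /\ forall x : 'cV[R]_n, 0 <= inner (M *m x) x.

Definition pd (M : 'M[R]_n) : Prop :=
  M^T = M /\ forall x : 'cV[R]_n, x != 0 -> 0 < inner (M *m x) x.

Definition loewner_le (A B : 'M[R]_n) : Prop := psd (B - A).

Definition grad (f : 'cV[R]_n -> R) (x : 'cV[R]_n) : 'cV[R]_n :=
  \col_i derive f x (delta_mx i 0 : 'cV[R]_n).

End Defs.

Section RandomMatrices.
Context {dT : measure_display} {Omega : measurableType dT} {R : realType}.
Variables (P : probability Omega R) (n : nat).

Definition rand_mx (X : Omega -> 'M[R]_n) : Prop :=
  forall i j, measurable_fun setT (fun w => X w i j).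

Definition mx_integrable (X : Omega -> 'M[R]_n) : Prop :=
  forall i j, P.-integrable setT (fun w => (X w i j)%:E).

Definition Emx (X : Omega -> 'M[R]_n) : 'M[R]_n :=
  \matrix_(i, j) fine ('E_P[fun w => X w i j])%E.

Definition mx_event (X : Omega -> 'M[R]_n) (B : 'I_n -> 'I_n -> set R)
  : set Omega := [set w | forall i j, B i j (X w i j)].

Definition borel_rect (B : 'I_n -> 'I_n -> set R) : Prop :=
  forall i j, measurable (B i j).

(* i.i.d. sequence of random matrices: measurable, identically distributed
   (same law on the product sigma-algebra, which is generated by the
   pi-system of Borel rectangles) and mutually independent (product rule
   over every finite subfamily and every choice of Borel rectangles) *)
Definition iid_mx (X : nat -> Omega -> 'M[R]_n) : Prop :=
  [/\ forall k, rand_mx (X k),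
      forall k B, borel_rect B -> P (mx_event (X k) B) = P (mx_event (X 0%N) B)
    & forall (J : seq nat) (B : nat -> 'I_n -> 'I_n -> set R),
        uniq J -> (forall k, borel_rect (B k)) ->
        P (\bigcap_(k in [set` J]) mx_event (X k) (B k))
        = (\prod_(k <- J) P (mx_event (X k) (B k)))%E].

End RandomMatrices.

From HB Require Import structures.
From mathcomp Require Import all_boot all_order all_algebra.
From mathcomp Require Import all_classical all_reals all_analysis.
From mathcomp Require Import measurable_realfun.
From mathcomp Require Import ring lra.
Set Implicit Arguments. Unset Strict Implicit. Unset Printing Implicit Defensive.
Import Order.TTheory GRing.Theory Num.Theory.
Import numFieldNormedType.Exports.
Local Open Scope classical_set_scope.
Local Open Scope ring_scope.

(* Both methods take sketched steps x - B S C grad f(x) with B C = D and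
   E[S] = I (B = D, C = I for det-CGD1; B = I, C = D for det-CGD2).  At a
   fixed point y with g = grad f(y), averaging the smoothness upper bound over
   S gives
     E f(y - B S C g) <= f(y) - g^T D g + 1/2 g^T E[C^T S B^T L B S C] g
                      <= f(y) - 1/2 ||g||_D^2
   by the Loewner hypothesis.  The iterate x^k is a measurable function of
   S^0, ..., S^(k-1), which are independent of S^k, so by Fubini this bound
   may be used with y = x^k, giving
     E f(x^(k+1)) + 1/2 E ||grad f(x^k)||_D^2 <= E f(x^k).
   Telescoping and f >= f^inf conclude. *)

Section ProductRule.
Context {dT : measure_display} {Omega : measurableType dT} {R : realType}.
Variable P : probability Omega R.
Local Open Scope ereal_scope.

Lemma g_sigma_measurable (G : set (set Omega)) :
  G `<=` measurable -> <<s G>> `<=` measurable.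
Proof. by move=> Gm; apply: smallest_sub => //; exact: sigma_algebra_measurable. Qed.

Lemma probability_setD (A B : set Omega) : measurable A -> measurable B ->
  B `<=` A -> P (A `\` B) = P A - P B.
Proof.
move=> mA mB BA; rewrite measureD // ?(setIidr BA) //.
by apply: le_lt_trans (probability_le1 P mA) _; rewrite ltry.
Qed.

(* Dynkin's pi-lambda theorem: the events A with P (A `&` H) = P A * P H
   form a lambda-system. *)
Lemma g_sigma_product_rule (G : set (set Omega)) (H : set Omega) :
  G `<=` measurable -> setI_closed G -> measurable H ->
  (forall A, G A -> P (A `&` H) = P A * P H) ->
  forall A, <<s G>> A -> P (A `&` H) = P A * P H.
Proof.
move=> Gm GI mH GH.
pose indepH := [set A | measurable A /\ P (A `&` H) = P A * P H].
suff : <<s G>> `<=` indepH by move=> sub A /sub[].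
apply: lambda_system_subset => //; last by move=> A GA; split; [exact: Gm|exact: GH].
split => //.
- by split; [exact: measurableT|rewrite setTI probability_setT mul1e].
- move=> A B BA [mA eA] [mB eB]; split; first exact: measurableD.
  have BHAH : B `&` H `<=` A `&` H by move=> w [Bw Hw]; split => //; exact: BA.
  have -> : (A `\` B) `&` H = (A `&` H) `\` (B `&` H).
    apply/seteqP; split => w /=; first by move=> [[Aw nBw] Hw]; split => // -[].
    by move=> [[Aw Hw] nBHw]; split => //; split => // Bw; exact: nBHw.
  rewrite probability_setD //; [|exact: measurableI|exact: measurableI].
  rewrite eA eB probability_setD // muleBl //.
  + exact: fin_num_measure.
  + by apply: fin_num_adde_defl; rewrite fin_numN; exact: fin_num_measure.
- move=> F ndF indepF; have mF k : measurable (F k) by case: (indepF k).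
  split; first exact: bigcupT_measurable.
  have mFH k : measurable (F k `&` H) by exact: measurableI.
  have ndFH : {homo (fun k => F k `&` H) : k l / (k <= l)%N >-> (k <= l)%O}.
    move=> k l kl; apply/subsetPset => w [Fw Hw]; split => //.
    by move/subsetPset: (ndF k l kl); apply.
  have cvgFH := nondecreasing_cvg_mu (mu := P) mFH (bigcupT_measurable _ mFH) ndFH.
  have cvgF := nondecreasing_cvg_mu (mu := P) mF (bigcupT_measurable _ mF) ndF.
  have := cvgeZr (fin_num_measure P _ mH) cvgF.
  have -> : (fun k => (P \o F) k * P H) = P \o (fun k => F k `&` H).
    by apply/funext => k /=; rewrite (proj2 (indepF k)).
  by rewrite setI_bigcupl; exact: cvg_unique cvgFH.
Qed.

Lemma g_sigma_independent (G H : set (set Omega)) :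
  G `<=` measurable -> setI_closed G -> H `<=` measurable -> setI_closed H ->
  (forall A B, G A -> H B -> P (A `&` B) = P A * P B) ->
  forall A B, <<s G>> A -> <<s H>> B -> P (A `&` B) = P A * P B.
Proof.
move=> Gm GI Hm HI GH A B sA sB.
apply: (g_sigma_product_rule Gm GI (g_sigma_measurable Hm sB)) => // A' GA'.
rewrite setIC muleC; apply: (g_sigma_product_rule Hm HI (Gm _ GA')) => // B' HB'.
by rewrite setIC muleC; exact: GH.
Qed.

End ProductRule.

Section IndependentFubini.
Context {dT : measure_display} {Omega : measurableType dT} {R : realType}.
Variable P : probability Omega R.
Local Open Scope ereal_scope.

Lemma measurable_id_g_sigma (G : set (set Omega)) : G `<=` measurable ->
  measurable_fun [set: Omega] (id : Omega -> g_sigma_algebraType G).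
Proof. by move=> Gm _ Y sY; rewrite setTI preimage_id; exact: g_sigma_measurable sY. Qed.

Definition id_g_sigma (G : set (set Omega)) (Gm : G `<=` measurable) :
  {mfun Omega >-> g_sigma_algebraType G} :=
  HB.pack (id : Omega -> g_sigma_algebraType G)
    (isMeasurableFun.Build _ _ _ _ _ (measurable_id_g_sigma Gm)).

Definition restr_prob (G : set (set Omega)) (Gm : G `<=` measurable) :
  probability (g_sigma_algebraType G) R := distribution P (id_g_sigma Gm).

Lemma integral_restr_prob (G : set (set Omega)) (Gm : G `<=` measurable)
    (h : g_sigma_algebraType G -> \bar R) :
  measurable_fun setT h -> (forall v, 0 <= h v) ->
  \int[restr_prob Gm]_v h v = \int[P]_w h w.
Proof. by move=> mh h0; rewrite ge0_integral_distribution. Qed.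

Variables (G H : set (set Omega)) (Gm : G `<=` measurable) (Hm : H `<=` measurable).
Hypothesis GH_indep :
  forall A B, <<s G>> A -> <<s H>> B -> P (A `&` B) = P A * P B.

Let TG := g_sigma_algebraType G.
Let TH := g_sigma_algebraType H.

Definition diag_g_sigma : {mfun Omega >-> (TG * TH)%type} :=
  HB.pack (fun w : Omega => ((w : TG), (w : TH)))
    (isMeasurableFun.Build _ _ _ _ _
       (measurable_fun_pair (measurable_id_g_sigma Gm) (measurable_id_g_sigma Hm))).

(* Independence says that the law of the diagonal map is the product of the
   two restrictions, which is then identified by its values on rectangles. *)
Lemma integral_diag_independent (F : (TG * TH)%type -> \bar R) :
  measurable_fun setT F -> (forall z, 0 <= F z) ->
  \int[P]_w F (w, w) = \int[restr_prob Gm]_v \int[restr_prob Hm]_u F (v, u).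
Proof.
move=> mF F0; rewrite -(fubini_tonelli1 F mF F0).
rewrite [LHS](_ : _ = \int[P]_w (F \o diag_g_sigma) w) //.
rewrite -ge0_integral_distribution //; apply: eq_measure_integral => A mA _ /=.
by apply/esym; apply: product_measure_unique => // A1 A2 mA1 mA2.
Qed.

Lemma integral_diag_le (F : (TG * TH)%type -> \bar R) (phi : TG -> \bar R) :
  measurable_fun setT F -> (forall z, 0 <= F z) -> measurable_fun setT phi ->
  (forall v, \int[P]_u F (v, u) <= phi v) ->
  \int[P]_w F (w, w) <= \int[P]_w phi w.
Proof.
move=> mF F0 mphi Fphi.
have phi0 v : 0 <= phi v by apply: le_trans (Fphi v); exact: integral_ge0.
rewrite integral_diag_independent // -integral_restr_prob //.
apply: ge0_le_integral => //.
- by move=> v _; exact: integral_ge0.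
- exact: (measurable_fun_fubini_tonelli_F F mF F0).
- by move=> v _; rewrite integral_restr_prob //; exact: measurable_fun_pair2.
Qed.

End IndependentFubini.

Definition mx_measurable {d0} {T : measurableType d0} {R : realType} {m p : nat}
  (M : T -> 'M[R]_(m, p)) : Prop :=
  forall i j, measurable_fun setT (fun t => M t i j).

Section MxMeasurable.
Context {d0 : measure_display} {T : measurableType d0} {R : realType}.
Implicit Types m p r : nat.

Lemma mx_measurable_cst m p (A : 'M[R]_(m, p)) : mx_measurable (fun _ : T => A).
Proof. by move=> i j; exact: measurable_cst. Qed.

Lemma mx_measurable_mul m p r (M : T -> 'M[R]_(m, p)) (N : T -> 'M[R]_(p, r)) :
  mx_measurable M -> mx_measurable N -> mx_measurable (fun t => M t *m N t).
Proof.
move=> mM mN i j; under eq_fun do rewrite mxE.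
by apply: measurable_sum => k; exact: measurable_funM.
Qed.

Lemma mx_measurable_sub m p (M N : T -> 'M[R]_(m, p)) :
  mx_measurable M -> mx_measurable N -> mx_measurable (fun t => M t - N t).
Proof.
by move=> mM mN i j; under eq_fun do rewrite !mxE; exact: measurable_funB.
Qed.

Lemma mx_measurable_tr m p (M : T -> 'M[R]_(m, p)) :
  mx_measurable M -> mx_measurable (fun t => (M t)^T).
Proof. by move=> mM i j; under eq_fun do rewrite mxE; exact: mM. Qed.

End MxMeasurable.

Section GridApproximation.
Context {R : realType}.

Definition grid_floor (N : nat) (y : R) : R :=
  (Num.floor (y * N.+1%:R))%:~R / N.+1%:R.

Lemma grid_floor_err N y : `|y - grid_floor N y| <= N.+1%:R^-1.
Proof.
have N0 : (0 : R) < N.+1%:R by rewrite ltr0n.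
have /andP[lefl ltfl] := floor_itv (y * N.+1%:R).
rewrite /grid_floor ger0_norm; last by rewrite subr_ge0 ler_pdivrMr.
rewrite lerBlDr -(@ler_pM2r _ N.+1%:R) // mulrDl mulVf ?gt_eqF //.
by rewrite divfK ?gt_eqF // addrC; apply: ltW; move: ltfl; rewrite intrD.
Qed.

Lemma grid_floor_cvg m p (A : 'M[R]_(m, p)) :
  (fun N => map_mx (grid_floor N) A) @ \oo --> A.
Proof.
apply/cvg_ballP => e e0; near=> N; split => // i j; rewrite mxE.
rewrite -ball_normE /=; apply: le_lt_trans (grid_floor_err N _) _.
near: N; exact: (near_infty_natSinv_lt (PosNum e0)).
Unshelve. all: end_near.
Qed.

Context {d0 : measure_display} {T : measurableType d0}.

Lemma measurable_floor_eq (g : T -> R) (z : int) (c : R) :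
  measurable_fun setT g -> measurable [set t | Num.floor (g t * c) = z].
Proof.
move=> mg; have -> : [set t | Num.floor (g t * c) = z] =
    (fun t => g t * c) @^-1` `[z%:~R, (z + 1)%:~R[.
  apply/seteqP; split => t /=; rewrite in_itv /=.
    by move=> <-; exact: floor_itv.
  by move=> h; apply/eqP; rewrite floor_eq.
by rewrite -[X in measurable X]setTI; exact: measurable_funM.
Qed.

(* On a grid the matrix takes countably many values, indexed by the integer
   matrices of the floors. *)
Lemma measurable_grid_mx m p (F : 'M[R]_(m, p) -> R) (v : T -> 'M[R]_(m, p)) N :
  mx_measurable v -> measurable_fun setT (fun t => F (map_mx (grid_floor N) (v t))).
Proof.
move=> mv _ Y mY; rewrite setTI.
pose c : R := N.+1%:R.
pose floors t : {ffun 'I_m * 'I_p -> int} := [ffun ij => Num.floor (v t ij.1 ij.2 * c)].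
pose grid (z : {ffun 'I_m * 'I_p -> int}) : 'M[R]_(m, p) :=
  \matrix_(i, j) ((z (i, j))%:~R / c).
have grid_floors t : grid (floors t) = map_mx (grid_floor N) (v t).
  by apply/matrixP => i j; rewrite !mxE ffunE.
have -> : (fun t => F (map_mx (grid_floor N) (v t))) @^-1` Y =
    \bigcup_z ([set t | floors t = z] `&` [set _ | Y (F (grid z))]).
  apply/seteqP; split => t /=.
    by move=> Yt; exists (floors t) => //; rewrite /= grid_floors.
  by move=> [z _ [<-]]; rewrite grid_floors.
apply: countable_bigcupT_measurable; first exact: countableP.
move=> z; apply: measurableI; last first.
  have [Yz|nYz] := pselect (Y (F (grid z))).
    by rewrite (propT Yz); exact: measurableT.
  by rewrite (propF nYz); exact: measurable0.
have -> : [set t | floors t = z] =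
    \bigcap_(ij in [set` enum {: 'I_m * 'I_p}]) [set t | Num.floor (v t ij.1 ij.2 * c) = z ij].
  apply/seteqP; split => t /=.
    by move=> <- ij _; rewrite ffunE.
  by move=> h; apply/ffunP => ij; rewrite ffunE; exact: (h ij (mem_enum _ _)).
rewrite bigcap_seq; apply: bigsetI_measurable => ij _; exact: measurable_floor_eq.
Qed.

Lemma continuous_mx_measurable m p (F : 'M[R]_(m, p) -> R) (v : T -> 'M[R]_(m, p)) :
  continuous F -> mx_measurable v -> measurable_fun setT (F \o v).
Proof.
move=> cF mv; apply: (measurable_fun_cvg (h := fun N t => F (map_mx (grid_floor N) (v t)))).
  by move=> N; exact: measurable_grid_mx.
by move=> t _; apply: (continuous_cvg _ (cF (v t))); exact: grid_floor_cvg.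
Qed.

End GridApproximation.

Section SmoothMeasurable.
Context {d0 : measure_display} {T : measurableType d0} {R : realType}.
Variables (m : nat) (f : 'cV[R]_m -> R).
Hypothesis f_diff : forall y, differentiable f y.

Lemma measurable_comp_differentiable (v : T -> 'cV[R]_m) :
  mx_measurable v -> measurable_fun setT (fun t => f (v t)).
Proof.
by apply: continuous_mx_measurable => y; exact: differentiable_continuous.
Qed.

(* Partial derivatives are limits of difference quotients along 1/(N+1). *)
Lemma mx_measurable_grad (v : T -> 'cV[R]_m) :
  mx_measurable v -> mx_measurable (fun t => grad f (v t)).
Proof.
move=> mv i j; pose e : 'cV[R]_m := delta_mx i 0; pose u (N : nat) : R := N.+1%:R^-1.
apply: (measurable_fun_cvg
  (h := fun N t => (u N)^-1 * (f (u N *: e + v t) - f (v t)))).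
- move=> N; apply: measurable_funM; first exact: measurable_cst.
  apply: measurable_funB; last exact: measurable_comp_differentiable.
  apply: measurable_comp_differentiable => a b.
  by under eq_fun do rewrite !mxE; apply: measurable_funD => //; exact: measurable_cst.
- move=> t _; rewrite /grad mxE.
  apply: ((cvgr_dnbhsP _ _ _).1 (diff_derivable (v := e) (f_diff (v t))) u); split.
    by move=> N; rewrite /u invr_eq0 pnatr_eq0.
  apply/cvgrPdist_lt => eps eps0; near=> N.
  rewrite sub0r normrN ger0_norm ?invr_ge0 ?ler0n //.
  near: N; exact: (near_infty_natSinv_lt (PosNum eps0)).
Unshelve. all: end_near.
Qed.

Lemma measurable_qnorm_grad (D : 'M[R]_m) (v : T -> 'cV[R]_m) :
  mx_measurable v -> measurable_fun setT (fun t => qnorm D (grad f (v t))).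
Proof.
move=> mv; have mg := mx_measurable_grad mv.
apply: (mx_measurable_mul (M := fun t => (D *m grad f (v t))^T)) => //.
by apply/mx_measurable_tr/mx_measurable_mul => //; exact: mx_measurable_cst.
Qed.

End SmoothMeasurable.

Lemma bilinear_mxE {R : comPzRingType} (n : nat) (M : 'M[R]_n) (u v : 'cV[R]_n) :
  (u^T *m M *m v) 0 0 = \sum_(b < n) \sum_(a < n) u a 0 * v b 0 * M a b.
Proof.
rewrite mxE; apply: eq_bigr => b _; rewrite mxE big_distrl /=.
by apply: eq_bigr => a _; rewrite !mxE; ring.
Qed.

Section BilinearExpectation.
Context {dT : measure_display} {Omega : measurableType dT} {R : realType}.
Variables (P : probability Omega R) (n : nat) (N : Omega -> 'M[R]_n).
Variables (u v : 'cV[R]_n).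
Hypothesis N_int : mx_integrable P N.
Local Open Scope ereal_scope.

Let bilinear_EFinE : (fun w => ((u^T *m N w *m v) 0 0)%:E) =
  (fun w => \sum_(b < n) \sum_(a < n) (u a 0 * v b 0)%:E * (N w a b)%:E).
Proof.
apply/funext => w; rewrite bilinear_mxE -sumEFin; apply: eq_bigr => b _.
by rewrite -sumEFin; apply: eq_bigr => a _; rewrite EFinM.
Qed.

Lemma integrable_bilinear_mx :
  P.-integrable setT (fun w => ((u^T *m N w *m v) 0 0)%:E).
Proof.
rewrite bilinear_EFinE; apply: integrable_sum => // b _.
by apply: integrable_sum => // a _; exact: integrableZl.
Qed.

Lemma integral_bilinear_mx :
  \int[P]_w ((u^T *m N w *m v) 0 0)%:E = ((u^T *m Emx P N *m v) 0 0)%:E.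
Proof.
rewrite bilinear_EFinE integral_sum //; last first.
  by move=> b; apply: integrable_sum => // a _; exact: integrableZl.
rewrite bilinear_mxE -sumEFin; apply: eq_bigr => b _.
rewrite integral_sum //; last by move=> a; exact: integrableZl.
rewrite -sumEFin; apply: eq_bigr => a _; rewrite integralZl // [RHS]EFinM.
by rewrite /Emx mxE unlock /= fineK //; exact: integrable_fin_num (N_int a b).
Qed.

End BilinearExpectation.

Section ExpectedSketchedDescent.
Context {dT : measure_display} {Omega : measurableType dT} {R : realType}.
Variable P : probability Omega R.

Lemma integral_cst_prob (c : R) : (\int[P]_(_ in setT) c%:E = c%:E)%E.
Proof.
by rewrite (integral_cst P measurableT) -[RHS]mule1; congr (_ * _)%E; exact: probability_setT.
Qed.

Lemma integral_le_affine (h a b : Omega -> R) (c qa qb : R) :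
  measurable_fun setT h -> (forall w, 0 <= h w) ->
  (forall w, h w <= c - a w + 2^-1 * b w) ->
  P.-integrable setT (fun w => (a w)%:E) -> (\int[P]_w (a w)%:E = qa%:E)%E ->
  P.-integrable setT (fun w => (b w)%:E) -> (\int[P]_w (b w)%:E = qb%:E)%E ->
  (\int[P]_w (h w)%:E <= (c - qa + 2^-1 * qb)%:E)%E.
Proof.
move=> mh h0 hle ia Ea ib Eb.
have ic : P.-integrable setT (fun _ => c%:E).
  exact: (finite_measure_integrable_cst P c measurableT).
have ica := integrableB measurableT ic ia.
have ib2 := integrableZl measurableT (2^-1) ib.
apply: le_trans (ge0_le_integral P measurableT _ _
  (measurable_int _ (integrableD measurableT ica ib2)) _) _.
- by move=> w _; rewrite lee_fin.
- exact/measurable_EFinP.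
- by move=> w _; rewrite -EFinM -EFinB -EFinD lee_fin.
rewrite integralD // integralB // integralZl // Ea Eb integral_cst_prob.
by rewrite -EFinM -EFinB -EFinD.
Qed.

Variables (d : nat) (f : 'cV[R]_d -> R) (finf : R) (L D : 'M[R]_d).
Hypothesis f_diff : forall y, differentiable f y.
Hypothesis f_ge_finf : forall y, finf <= f y.
Hypothesis L_sym : L^T = L.
Hypothesis f_smooth : forall u v, f u <= f v + inner (grad f v) (u - v)
                                    + 2^-1 * inner (L *m (u - v)) (u - v).
Hypothesis D_sym : D^T = D.

Lemma smooth_step_le (y z : 'cV[R]_d) :
  f (y - z) <= f y - inner (grad f y) z + 2^-1 * inner (L *m z) z.
Proof.
have := f_smooth (y - z) y; rewrite (_ : y - z - y = - z); last by rewrite addrAC subrr add0r.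
by rewrite /inner !mulmxN raddfN /= mulNmx opprK !mxE.
Qed.

Lemma loewner_le_quad (E : 'M[R]_d) (g : 'cV[R]_d) :
  loewner_le E D -> (g^T *m E *m g) 0 0 <= qnorm D g.
Proof.
move=> [ED_sym ED_psd]; have := ED_psd g.
rewrite /qnorm /inner !trmx_mul ED_sym D_sym mulmxBr mulmxBl !mxE.
by rewrite subr_ge0.
Qed.

Lemma expected_sketched_descent (X : Omega -> 'M[R]_d) (B C : 'M[R]_d)
    (y : 'cV[R]_d) :
  mx_measurable X -> (forall w, (X w)^T = X w) ->
  mx_integrable P X -> Emx P X = 1%:M -> B *m C = D ->
  mx_integrable P (fun w => C^T *m X w *m B^T *m L *m B *m X w *m C) ->
  loewner_le (Emx P (fun w => C^T *m X w *m B^T *m L *m B *m X w *m C)) D ->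
  (\int[P]_w (f (y - B *m X w *m C *m grad f y) - finf)%:E
    <= (f y - finf - 2^-1 * qnorm D (grad f y))%:E)%E.
Proof.
move=> mX X_sym iX EX BCD iQ leQ; set g := grad f y.
pose Q w := C^T *m X w *m B^T *m L *m B *m X w *m C.
have lin w : inner g (B *m X w *m C *m g) = ((B^T *m g)^T *m X w *m (C *m g)) 0 0.
  by rewrite /inner trmx_mul trmxK !mulmxA.
have quad w : inner (L *m (B *m X w *m C *m g)) (B *m X w *m C *m g) =
    (g^T *m Q w *m g) 0 0.
  by rewrite /inner !trmx_mul X_sym L_sym !mulmxA.
have Elin : ((B^T *m g)^T *m Emx P X *m (C *m g)) 0 0 = qnorm D g.
  by rewrite EX mulmx1 /qnorm /inner !trmx_mul trmxK D_sym !mulmxA -(mulmxA _ B) BCD.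
apply: le_trans (integral_le_affine (c := f y - finf)
  (a := fun w => ((B^T *m g)^T *m X w *m (C *m g)) 0 0)
  (b := fun w => (g^T *m Q w *m g) 0 0) _ _ _
  (integrable_bilinear_mx _ _ iX) (integral_bilinear_mx _ _ iX)
  (integrable_bilinear_mx g g iQ) (integral_bilinear_mx g g iQ)) _.
- apply: measurable_funB; last exact: measurable_cst.
  apply: measurable_comp_differentiable => //.
  apply: mx_measurable_sub; first exact: mx_measurable_cst.
  do 2 (apply: mx_measurable_mul; last exact: mx_measurable_cst).
  by apply: mx_measurable_mul => //; exact: mx_measurable_cst.
- by move=> w; rewrite subr_ge0.
- by move=> w; have := smooth_step_le y (B *m X w *m C *m g); rewrite lin quad; lra.
- by rewrite Elin lee_fin; have := loewner_le_quad g leQ; lra.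
Qed.

End ExpectedSketchedDescent.

Section MatrixRectangles.
Context {dT : measure_display} {Omega : measurableType dT} {R : realType}.
Variables (P : probability Omega R) (n : nat) (X : nat -> Omega -> 'M[R]_n).
Hypothesis X_meas : forall k, rand_mx (X k).
Local Open Scope ereal_scope.

(* A pi-system generating the sigma-algebra of (X j)_(j in J). *)
Definition mx_rects (J : seq nat) : set (set Omega) :=
  [set A | exists2 B : nat -> 'I_n -> 'I_n -> set R,
     forall j, borel_rect (B j) & A = \bigcap_(j in [set` J]) mx_event (X j) (B j)].

Lemma mx_event_measurable j B : borel_rect B -> measurable (mx_event (X j) B).
Proof.
move=> mB; have -> : mx_event (X j) B =
    \bigcap_(ab in [set` enum {: 'I_n * 'I_n}]) ((fun w => X j w ab.1 ab.2) @^-1` B ab.1 ab.2).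
  apply/seteqP; split => w /=; first by move=> Bw ab _; exact: Bw.
  by move=> Bw a b; exact: (Bw (a, b) (mem_enum _ _)).
rewrite bigcap_seq; apply: bigsetI_measurable => ab _.
by rewrite -[X in measurable X]setTI; apply: X_meas => //; exact: mB.
Qed.

Lemma mx_rects_measurable J : mx_rects J `<=` measurable.
Proof.
by move=> _ [B mB ->]; apply: bigcap_measurableType => j _; exact: mx_event_measurable.
Qed.

Lemma mx_rects_setI_closed J : setI_closed (mx_rects J).
Proof.
move=> _ _ [B1 mB1 ->] [B2 mB2 ->].
exists (fun j a b => B1 j a b `&` B2 j a b).
  by move=> j a b; apply: measurableI; [exact: mB1|exact: mB2].
apply/seteqP; split => w /=.
  by move=> [B1w B2w] j jJ a b; split; [exact: B1w|exact: B2w].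
by move=> Bw; split => j jJ a b; have [] := Bw j jJ a b.
Qed.

Lemma mx_measurable_rects J j : j \in J ->
  mx_measurable (fun w : g_sigma_algebraType (mx_rects J) => X j w).
Proof.
move=> jJ a b _ Y mY; rewrite setTI; apply: sub_sigma_algebra.
exists (fun j' a' b' => if [&& j' == j, a' == a & b' == b] then Y else setT).
  by move=> j' a' b'; case: ifP.
apply/seteqP; split => w /=.
  by move=> Yw j' _ a' b'; case: ifP => // /and3P[/eqP -> /eqP -> /eqP ->].
by move=> Bw; have := Bw j jJ a b; rewrite !eqxx.
Qed.

Hypothesis X_indep : forall (J : seq nat) (B : nat -> 'I_n -> 'I_n -> set R),
  uniq J -> (forall k, borel_rect (B k)) ->
  P (\bigcap_(k in [set` J]) mx_event (X k) (B k))
  = \prod_(k <- J) P (mx_event (X k) (B k)).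

Lemma mx_rects_product J1 J2 A1 A2 : uniq (J1 ++ J2) ->
  mx_rects J1 A1 -> mx_rects J2 A2 -> P (A1 `&` A2) = P A1 * P A2.
Proof.
move=> uJ [B1 mB1 ->] [B2 mB2 ->].
move: (uJ); rewrite cat_uniq => /and3P[uJ1 /hasPn J21 uJ2].
pose B j := if j \in J1 then B1 j else B2 j.
have mB j : borel_rect (B j) by rewrite /B; case: ifP.
have -> : \bigcap_(j in [set` J1]) mx_event (X j) (B1 j) =
    \bigcap_(j in [set` J1]) mx_event (X j) (B j).
  by apply: eq_bigcapr => j /= jJ1; rewrite /B jJ1.
have -> : \bigcap_(j in [set` J2]) mx_event (X j) (B2 j) =
    \bigcap_(j in [set` J2]) mx_event (X j) (B j).
  by apply: eq_bigcapr => j /= /J21 /negbTE jJ1; rewrite /B jJ1.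
rewrite -bigcap_setU (_ : _ `|` _ = [set` J1 ++ J2]); last first.
  apply/seteqP; split => j /=; rewrite mem_cat; first by case=> ->; rewrite ?orbT.
  by case/orP; [left|right].
by rewrite !X_indep // big_cat.
Qed.

Lemma g_sigma_mx_rects_independent J1 J2 A1 A2 : uniq (J1 ++ J2) ->
  <<s mx_rects J1>> A1 -> <<s mx_rects J2>> A2 -> P (A1 `&` A2) = P A1 * P A2.
Proof.
move=> uJ; apply: g_sigma_independent; try exact: mx_rects_measurable.
- exact: mx_rects_setI_closed.
- exact: mx_rects_setI_closed.
- by move=> B1 B2; exact: mx_rects_product.
Qed.

End MatrixRectangles.

Lemma pd_psd {R : realType} (n : nat) (M : 'M[R]_n) : pd M -> psd M.
Proof.
move=> [M_sym M_pos]; split => // y; have [->|y0] := eqVneq y 0; last exact/ltW/M_pos.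
by rewrite /inner !mulmx0 mxE.
Qed.

Section SketchedGradientDescent.
Context {dT : measure_display} {Omega : measurableType dT} {R : realType}.
Variables (P : probability Omega R) (d : nat) (f : 'cV[R]_d -> R) (finf : R).
Variables (D B C : 'M[R]_d) (X : nat -> Omega -> 'M[R]_d).
Variables (x0 : 'cV[R]_d) (x : nat -> Omega -> 'cV[R]_d).
Hypothesis f_diff : forall y, differentiable f y.
Hypothesis f_ge_finf : forall y, finf <= f y.
Hypothesis D_psd : psd D.
Hypothesis X_iid : iid_mx P X.
Hypothesis x_0 : forall w, x 0%N w = x0.
Hypothesis x_S : forall k w, x k.+1 w = x k w - B *m X k w *m C *m grad f (x k w).
Hypothesis expected_decrease : forall k y,
  (\int[P]_w (f (y - B *m X k w *m C *m grad f y) - finf)%:E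
    <= (f y - finf - 2^-1 * qnorm D (grad f y))%:E)%E.
Local Open Scope ereal_scope.

Let X_meas k : rand_mx (X k). Proof. by case: X_iid. Qed.

Lemma mx_measurable_iterate_past k j : (j <= k)%N ->
  mx_measurable (fun w : g_sigma_algebraType (mx_rects X (iota 0 k)) => x j w).
Proof.
elim: j => [_|j IH jk].
  by move=> a b; under eq_fun do rewrite x_0; exact: measurable_cst.
have xj := IH (ltnW jk).
have Xj : mx_measurable (fun w : g_sigma_algebraType (mx_rects X (iota 0 k)) => X j w).
  by apply: mx_measurable_rects => //; rewrite mem_iota.
have -> : (fun w : g_sigma_algebraType (mx_rects X (iota 0 k)) => x j.+1 w) =
    (fun w => (x j w - B *m X j w *m C *m grad f (x j w))%R).
  by apply/funext => w; rewrite x_S.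
apply: mx_measurable_sub => //; apply: mx_measurable_mul; last exact: mx_measurable_grad.
apply: mx_measurable_mul; last exact: mx_measurable_cst.
by apply: mx_measurable_mul => //; exact: mx_measurable_cst.
Qed.

Lemma mx_measurable_iterate k : mx_measurable (x k).
Proof.
move=> a b; exact: measurableT_comp (mx_measurable_iterate_past (leqnn k) a b)
  (measurable_id_g_sigma (mx_rects_measurable X_meas (J := iota 0 k))).
Qed.

Lemma expected_gap_next_le k :
  \int[P]_w (f (x k.+1 w) - finf)%:E <=
  \int[P]_w (f (x k w) - finf - 2^-1 * qnorm D (grad f (x k w)))%:E.
Proof.
have [_ _ X_indep] := X_iid.
pose Past := mx_rects X (iota 0 k); pose Now := mx_rects X [:: k].
have indep A1 A2 : <<s Past>> A1 -> <<s Now>> A2 -> P (A1 `&` A2) = P A1 * P A2.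
  apply: g_sigma_mx_rects_independent => //.
  by rewrite cat_uniq iota_uniq /= mem_iota ltnn andbF.
have xk := mx_measurable_iterate_past (leqnn k).
have Xk : mx_measurable (fun u : g_sigma_algebraType Now => X k u).
  by apply: mx_measurable_rects => //; exact: mem_head.
pose TPast := g_sigma_algebraType Past; pose TNow := g_sigma_algebraType Now.
pose F (z : TPast * TNow) :=
  (f (x k z.1 - B *m X k z.2 *m C *m grad f (x k z.1)) - finf)%:E.
have mF : measurable_fun setT F.
  apply/measurable_EFinP/measurable_funB; last exact: measurable_cst.
  have x1 : mx_measurable (fun z : TPast * TNow => x k z.1).
    by move=> a b; exact: measurableT_comp (xk a b) measurable_fst.
  have X2 : mx_measurable (fun z : TPast * TNow => X k z.2).
    by move=> a b; exact: measurableT_comp (Xk a b) measurable_snd.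
  apply: measurable_comp_differentiable => //; apply: mx_measurable_sub => //.
  apply: mx_measurable_mul; last exact: mx_measurable_grad.
  apply: mx_measurable_mul; last exact: mx_measurable_cst.
  by apply: mx_measurable_mul => //; exact: mx_measurable_cst.
have F0 z : 0 <= F z by rewrite lee_fin subr_ge0.
have mphi : measurable_fun [set: g_sigma_algebraType Past]
    (fun v => (f (x k v) - finf - 2^-1 * qnorm D (grad f (x k v)))%:E).
  apply/measurable_EFinP/measurable_funB.
    by apply: measurable_funB; [exact: measurable_comp_differentiable|exact: measurable_cst].
  by apply: measurable_funM; [exact: measurable_cst|exact: measurable_qnorm_grad].
have -> : \int[P]_w (f (x k.+1 w) - finf)%:E = \int[P]_w F (w, w).
  by apply: eq_integral => w _; rewrite x_S.
have Pastm := mx_rects_measurable X_meas (J := iota 0 k).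
have Nowm := mx_rects_measurable X_meas (J := [:: k]).
apply: (integral_diag_le Pastm Nowm indep mF F0 mphi) => v.
by rewrite /F /=; exact: expected_decrease.
Qed.

Lemma expected_descent_step k :
  \int[P]_w (f (x k.+1 w) - finf)%:E
    + (2^-1)%:E * \int[P]_w (qnorm D (grad f (x k w)))%:E
  <= \int[P]_w (f (x k w) - finf)%:E.
Proof.
have xk := mx_measurable_iterate k.
have mq := measurable_qnorm_grad f_diff D xk.
have q0 w : (0 <= qnorm D (grad f (x k w)))%R by exact: D_psd.2.
have mphi : measurable_fun setT
    (fun w => f (x k w) - finf - 2^-1 * qnorm D (grad f (x k w)))%R.
  apply: measurable_funB; last by apply: measurable_funM => //; exact: measurable_cst.
  by apply: measurable_funB; [exact: measurable_comp_differentiable|exact: measurable_cst].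
have phi0 w : (0 <= f (x k w) - finf - 2^-1 * qnorm D (grad f (x k w)))%R.
  rewrite -lee_fin; apply: le_trans (expected_decrease k (x k w)).
  by apply: integral_ge0 => u _; rewrite lee_fin subr_ge0.
apply: le_trans (leeD2r _ (expected_gap_next_le k)) _.
rewrite -ge0_integralZl_EFin //; last 2 first.
- by move=> w _; rewrite lee_fin.
- exact/measurable_EFinP.
rewrite -ge0_integralD //.
- by under eq_integral do rewrite -EFinM -EFinD subrK.
- by move=> w _; rewrite lee_fin.
- exact/measurable_EFinP.
- by move=> w _; rewrite -EFinM lee_fin mulr_ge0.
- by apply/measurable_EFinP/measurable_funM => //; exact: measurable_cst.
Qed.

Lemma expected_gap_telescope K :
  \int[P]_w (f (x K w) - finf)%:E
    + (2^-1)%:E * \sum_(k < K) \int[P]_w (qnorm D (grad f (x k w)))%:E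
  <= (f x0 - finf)%:E.
Proof.
elim: K => [|K IH].
  rewrite big_ord0 mule0 adde0; under eq_integral do rewrite x_0.
  by rewrite integral_cst_prob.
apply: le_trans IH; rewrite big_ord_recr /= ge0_muleDr //; last 2 first.
- by apply: sume_ge0 => k _; apply: integral_ge0 => w _; rewrite lee_fin; exact: D_psd.2.
- by apply: integral_ge0 => w _; rewrite lee_fin; exact: D_psd.2.
by rewrite addeCA addeC leeD2r // expected_descent_step.
Qed.

Lemma sum_expectation_qnorm_grad_le K :
  \sum_(k < K) 'E_P[fun w => qnorm D (grad f (x k w))] <= (2 * (f x0 - finf))%:E.
Proof.
under eq_bigr do rewrite unlock.
set s := \sum_(k < K) _.
have half_s : (2^-1)%:E * s <= (f x0 - finf)%:E.
  apply: le_trans (expected_gap_telescope K); apply: leeDr.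
  by apply: integral_ge0 => w _; rewrite lee_fin subr_ge0.
have -> : s = 2%:E * ((2^-1)%:E * s) by rewrite muleA -EFinM divff ?mul1e // pnatr_eq0.
by rewrite EFinM; apply: lee_wpmul2l => //; rewrite lee_fin.
Qed.

End SketchedGradientDescent.

Section DeterministicCGD.
Context {dT : measure_display} {Omega : measurableType dT} {R : realType}.
Variables (P : probability Omega R) (d : nat) (f : 'cV[R]_d -> R) (finf : R).
Variables (L D : 'M[R]_d) (x0 : 'cV[R]_d) (x : nat -> Omega -> 'cV[R]_d).
Variable S : nat -> Omega -> 'M[R]_d.
Hypothesis f_diff : forall y, differentiable f y.
Hypothesis f_ge_finf : forall y, finf <= f y.
Hypothesis L_sym : L^T = L.
Hypothesis f_smooth : forall u v, f u <= f v + inner (grad f v) (u - v)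
                                    + 2^-1 * inner (L *m (u - v)) (u - v).
Hypothesis D_pd : pd D.
Hypothesis x_0 : forall w, x 0%N w = x0.
Hypothesis S_psd : forall k w, psd (S k w).
Hypothesis S_iid : iid_mx P S.
Hypothesis S_int : forall k, mx_integrable P (S k).
Hypothesis S_mean : forall k, Emx P (S k) = 1%:M.

Let D_sym : D^T = D. Proof. by case: D_pd. Qed.
Let S_meas k : mx_measurable (S k). Proof. by have [mS _ _] := S_iid; exact: mS. Qed.
Let S_sym k w : (S k w)^T = S k w. Proof. by case: (S_psd k w). Qed.

Lemma det_cgd1_sum_le :
  (forall k w, x k.+1 w = x k w - D *m S k w *m grad f (x k w)) ->
  (forall k, mx_integrable P (fun w => S k w *m D *m L *m D *m S k w)) ->
  (forall k, loewner_le (Emx P (fun w => S k w *m D *m L *m D *m S k w)) D) ->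
  forall K, (\sum_(k < K) 'E_P[fun w => qnorm D (grad f (x k w))]
              <= (2 * (f x0 - finf))%:E)%E.
Proof.
move=> x_S Q_int Q_le.
have QE k : (fun w => 1%:M^T *m S k w *m D^T *m L *m D *m S k w *m 1%:M) =
    (fun w => S k w *m D *m L *m D *m S k w).
  by apply/funext => w; rewrite trmx1 mul1mx mulmx1 D_sym.
apply: (sum_expectation_qnorm_grad_le (B := D) (C := 1%:M) (X := S)) => //.
- exact: pd_psd.
- by move=> k w; rewrite mulmx1.
- move=> k y; apply: (expected_sketched_descent f_diff f_ge_finf L_sym f_smooth D_sym
    y (S_meas k) (S_sym k)); by rewrite ?QE ?mulmx1.
Qed.

Lemma det_cgd2_sum_le :
  (forall k w, x k.+1 w = x k w - S k w *m D *m grad f (x k w)) ->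
  (forall k, mx_integrable P (fun w => D *m S k w *m L *m S k w *m D)) ->
  (forall k, loewner_le (Emx P (fun w => D *m S k w *m L *m S k w *m D)) D) ->
  forall K, (\sum_(k < K) 'E_P[fun w => qnorm D (grad f (x k w))]
              <= (2 * (f x0 - finf))%:E)%E.
Proof.
move=> x_S Q_int Q_le.
have QE k : (fun w => D^T *m S k w *m 1%:M^T *m L *m 1%:M *m S k w *m D) =
    (fun w => D *m S k w *m L *m S k w *m D).
  by apply/funext => w; rewrite trmx1 !mulmx1 D_sym.
apply: (sum_expectation_qnorm_grad_le (B := 1%:M) (C := D) (X := S)) => //.
- exact: pd_psd.
- by move=> k w; rewrite mul1mx.
- move=> k y; apply: (expected_sketched_descent f_diff f_ge_finf L_sym f_smooth D_sym
    y (S_meas k) (S_sym k)); by rewrite ?QE ?mul1mx.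
Qed.

End DeterministicCGD.

Lemma mean_le_of_sum_le {R : realType} (K : nat) (s : \bar R) (c : R) :
  (s <= c%:E)%E -> ((K%:R^-1)%:E * s <= (c / K%:R)%:E)%E.
Proof.
move=> sc; rewrite [X in (_ <= X)%E]EFinM [X in (_ <= X)%E]muleC.
exact: lee_wpmul2l.
Qed.

Theorem theorem1 (R : realType) (d : nat) (f : 'cV[R]_d -> R) (finf : R)
  (L D : 'M[R]_d) (dT : measure_display) (Omega : measurableType dT)
  (P : probability Omega R) (S Tm : nat -> Omega -> 'M[R]_d)
  (x0 : 'cV[R]_d) (x : nat -> Omega -> 'cV[R]_d) :
  (forall y, differentiable f y) ->
  (forall y, finf <= f y) ->
  psd L ->
  (forall u v, f u <= f v + inner (grad f v) (u - v)
                      + 2^-1 * inner (L *m (u - v)) (u - v)) ->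
  pd D ->
  (forall k w, psd (S k w)) -> (forall k w, psd (Tm k w)) ->
  iid_mx P S -> iid_mx P Tm ->
  (forall k, mx_integrable P (S k)) -> (forall k, mx_integrable P (Tm k)) ->
  (forall k, Emx P (S k) = 1%:M) -> (forall k, Emx P (Tm k) = 1%:M) ->
  (forall w, x 0%N w = x0) ->
  ( [/\ forall k w, x k.+1 w = x k w - D *m S k w *m grad f (x k w),
        forall k, mx_integrable P (fun w => S k w *m D *m L *m D *m S k w)
      & forall k, loewner_le (Emx P (fun w => S k w *m D *m L *m D *m S k w)) D]
  \/
    [/\ forall k w, x k.+1 w = x k w - Tm k w *m D *m grad f (x k w),
        forall k, mx_integrable P (fun w => D *m Tm k w *m L *m Tm k w *m D)
      & forall k, loewner_le (Emx P (fun w => D *m Tm k w *m L *m Tm k w *m D)) D]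
  ) ->
  forall K : nat, (1 <= K)%N ->
  ((K%:R)^-1%:E * \sum_(k < K) 'E_P[fun w => qnorm D (grad f (x k w))]
     <= ((2 * (f x0 - finf)) / K%:R)%:E)%E.
Proof.
move=> f_diff f_ge_finf [L_sym _] f_smooth D_pd S_psd T_psd S_iid T_iid
  S_int T_int S_mean T_mean x_0 method K _.
(* K = 0 would be harmless too, since 0^-1 = 0. *)
apply: mean_le_of_sum_le.
case: method => [[x_S Q_int Q_le]|[x_S Q_int Q_le]].
- exact: (det_cgd1_sum_le f_diff f_ge_finf L_sym f_smooth D_pd x_0 S_psd S_iid
    S_int S_mean x_S Q_int Q_le).
- exact: (det_cgd2_sum_le f_diff f_ge_finf L_sym f_smooth D_pd x_0 T_psd T_iid
    T_int T_mean x_S Q_int Q_le).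
Qed.
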